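(* Consider the closed-loop lumped-parameter (0D) circulation model described in the context and suppose $p_{\mathrm{EX}}$ is constant in time. Let the state functions be differentiable solutions of the system (i)–(iii) of the context on $[0,T]$ that are periodic, in the sense that the state vector $\mathbf{c}_1=(V_{\mathrm{LA}},V_{\mathrm{LV}},V_{\mathrm{RA}},V_{\mathrm{RV}},p_{\mathrm{AR}}^{\mathrm{SYS}},p_{\mathrm{VEN}}^{\mathrm{SYS}},p_{\mathrm{AR}}^{\mathrm{PUL}},p_{\mathrm{VEN}}^{\mathrm{PUL}},Q_{\mathrm{AR}}^{\mathrm{SYS}},Q_{\mathrm{VEN}}^{\mathrm{SYS}},Q_{\mathrm{AR}}^{\mathrm{PUL}},Q_{\mathrm{VEN}}^{\mathrm{PUL}})$ satisfies $\mathbf{c}_1(0)=\mathbf{c}_1(T)$. Then $W^{\mathrm{act}}+W^{\mathrm{diss}}=0$, where $W^{\mathrm{act}}=\int_0^T\Pi^{\mathrm{act}}(t)\,dt$ and $W^{\mathrm{diss}}=\int_0^T\Pi^{\mathrm{diss}}(t)\,dt$.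
   Context: Chamber indices $i\in\{\mathrm{LA},\mathrm{LV},\mathrm{RA},\mathrm{RV}\}$; vascular indices $j\in\{\mathrm{AR},\mathrm{VEN}\}$, $k\in\{\mathrm{SYS},\mathrm{PUL}\}$. Positive constants $C_j^k,R_j^k,L_j^k$, constants $V_{0,i}$ and $E_i^{\mathrm{pass}}>0$, given functions $E_i^{\mathrm{act}}(t)$, and the external pressure $p_{\mathrm{EX}}$; for each valve $v\in\{\mathrm{MV},\mathrm{AV},\mathrm{TV},\mathrm{PV}\}$ a resistance $R_v(p_1,p_2)=R_{\min}$ if $p_1<p_2$ and $R_{\max}$ if $p_1\ge p_2$, with $0<R_{\min}$, $R_{\max}<\infty$. Set $E_i(t)=E_i^{\mathrm{pass}}+E_i^{\mathrm{act}}(t)$. (i) $p_i=p_{\mathrm{EX}}+E_i(V_i-V_{0,i})$ for each chamber; $Q_{\mathrm{MV}}=\frac{p_{\mathrm{LA}}-p_{\mathrm{LV}}}{R_{\mathrm{MV}}(p_{\mathrm{LA}},p_{\mathrm{LV}})}$, $Q_{\mathrm{AV}}=\frac{p_{\mathrm{LV}}-p_{\mathrm{AR}}^{\mathrm{SYS}}}{R_{\mathrm{AV}}(p_{\mathrm{LV}},p_{\mathrm{AR}}^{\mathrm{SYS}})}$, $Q_{\mathrm{TV}}=\frac{p_{\mathrm{RA}}-p_{\mathrm{RV}}}{R_{\mathrm{TV}}(p_{\mathrm{RA}},p_{\mathrm{RV}})}$, $Q_{\mathrm{PV}}=\frac{p_{\mathrm{RV}}-p_{\mathrm{AR}}^{\mathrm{PUL}}}{R_{\mathrm{PV}}(p_{\mathrm{RV}},p_{\mathrm{AR}}^{\mathrm{PUL}})}$.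 (ii) $\dot V_{\mathrm{LA}}=Q_{\mathrm{VEN}}^{\mathrm{PUL}}-Q_{\mathrm{MV}}$, $\dot V_{\mathrm{LV}}=Q_{\mathrm{MV}}-Q_{\mathrm{AV}}$, $\dot V_{\mathrm{RA}}=Q_{\mathrm{VEN}}^{\mathrm{SYS}}-Q_{\mathrm{TV}}$, $\dot V_{\mathrm{RV}}=Q_{\mathrm{TV}}-Q_{\mathrm{PV}}$; $C_{\mathrm{AR}}^{\mathrm{SYS}}\dot p_{\mathrm{AR}}^{\mathrm{SYS}}=Q_{\mathrm{AV}}-Q_{\mathrm{AR}}^{\mathrm{SYS}}$, $C_{\mathrm{VEN}}^{\mathrm{SYS}}\dot p_{\mathrm{VEN}}^{\mathrm{SYS}}=Q_{\mathrm{AR}}^{\mathrm{SYS}}-Q_{\mathrm{VEN}}^{\mathrm{SYS}}$, $C_{\mathrm{AR}}^{\mathrm{PUL}}\dot p_{\mathrm{AR}}^{\mathrm{PUL}}=Q_{\mathrm{PV}}-Q_{\mathrm{AR}}^{\mathrm{PUL}}$, $C_{\mathrm{VEN}}^{\mathrm{PUL}}\dot p_{\mathrm{VEN}}^{\mathrm{PUL}}=Q_{\mathrm{AR}}^{\mathrm{PUL}}-Q_{\mathrm{VEN}}^{\mathrm{PUL}}$. (iii) $\frac{L_{\mathrm{AR}}^{\mathrm{SYS}}}{R_{\mathrm{AR}}^{\mathrm{SYS}}}\dot Q_{\mathrm{AR}}^{\mathrm{SYS}}=-Q_{\mathrm{AR}}^{\mathrm{SYS}}-\frac{p_{\mathrm{VEN}}^{\mathrm{SYS}}-p_{\mathrm{AR}}^{\mathrm{SYS}}}{R_{\mathrm{AR}}^{\mathrm{SYS}}}$,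 $\frac{L_{\mathrm{VEN}}^{\mathrm{SYS}}}{R_{\mathrm{VEN}}^{\mathrm{SYS}}}\dot Q_{\mathrm{VEN}}^{\mathrm{SYS}}=-Q_{\mathrm{VEN}}^{\mathrm{SYS}}-\frac{p_{\mathrm{RA}}-p_{\mathrm{VEN}}^{\mathrm{SYS}}}{R_{\mathrm{VEN}}^{\mathrm{SYS}}}$, $\frac{L_{\mathrm{AR}}^{\mathrm{PUL}}}{R_{\mathrm{AR}}^{\mathrm{PUL}}}\dot Q_{\mathrm{AR}}^{\mathrm{PUL}}=-Q_{\mathrm{AR}}^{\mathrm{PUL}}-\frac{p_{\mathrm{VEN}}^{\mathrm{PUL}}-p_{\mathrm{AR}}^{\mathrm{PUL}}}{R_{\mathrm{AR}}^{\mathrm{PUL}}}$, $\frac{L_{\mathrm{VEN}}^{\mathrm{PUL}}}{R_{\mathrm{VEN}}^{\mathrm{PUL}}}\dot Q_{\mathrm{VEN}}^{\mathrm{PUL}}=-Q_{\mathrm{VEN}}^{\mathrm{PUL}}-\frac{p_{\mathrm{LA}}-p_{\mathrm{VEN}}^{\mathrm{PUL}}}{R_{\mathrm{VEN}}^{\mathrm{PUL}}}$. Powers: $\Pi^{\mathrm{act}}=\sum_i -E_i^{\mathrm{act}}(V_i-V_{0,i})\dot V_i$; $\Pi^{\mathrm{diss}}=\Pi_{\mathrm{MV}}+\Pi_{\mathrm{AV}}+\Pi_{\mathrm{TV}}+\Pi_{\mathrm{PV}}+\sum_{j,k}\Pi_j^k$ with $\Pi_j^k=-R_j^k(Q_j^k)^2$,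 $\Pi_{\mathrm{MV}}=-\frac{(p_{\mathrm{LA}}-p_{\mathrm{LV}})^2}{R_{\mathrm{MV}}(p_{\mathrm{LA}},p_{\mathrm{LV}})}$, $\Pi_{\mathrm{AV}}=-\frac{(p_{\mathrm{LV}}-p_{\mathrm{AR}}^{\mathrm{SYS}})^2}{R_{\mathrm{AV}}(p_{\mathrm{LV}},p_{\mathrm{AR}}^{\mathrm{SYS}})}$, $\Pi_{\mathrm{TV}}=-\frac{(p_{\mathrm{RA}}-p_{\mathrm{RV}})^2}{R_{\mathrm{TV}}(p_{\mathrm{RA}},p_{\mathrm{RV}})}$, $\Pi_{\mathrm{PV}}=-\frac{(p_{\mathrm{RV}}-p_{\mathrm{AR}}^{\mathrm{PUL}})^2}{R_{\mathrm{PV}}(p_{\mathrm{RV}},p_{\mathrm{AR}}^{\mathrm{PUL}})}$. *)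

From Stdlib Require Import Reals.
From Coquelicot Require Import Coquelicot.
Open Scope R_scope.

Definition valveR (Rmin Rmax p1 p2 : R) : R :=
  if Rlt_dec p1 p2 then Rmin else Rmax.

Definition valveQ (Rmin Rmax p1 p2 : R) : R :=
  (p1 - p2) / valveR Rmin Rmax p1 p2.

Definition valvePi (Rmin Rmax p1 p2 : R) : R :=
  - ((p1 - p2) ^ 2) / valveR Rmin Rmax p1 p2.

Definition chamberP (pEX Epass : R) (Eact : R -> R) (V0 : R) (V : R -> R) (t : R) : R :=
  pEX + (Epass + Eact t) * (V t - V0).

Definition cont_in_0T (T : R) (f : R -> R) (t : R) : Prop :=
  filterlim f (within (fun u => 0 <= u <= T) (locally t)) (locally (f t)).

From Stdlib Require Import Reals Lra.
From Coquelicot Require Import Coquelicot.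
Open Scope R_scope.

(** The stored energy
      E = sum over chambers of (E^pass/2 (V - V0)^2 + p_EX V) + sum of C/2 p^2 + sum of L/2 Q^2
    satisfies dE/dt = Pi^act + Pi^diss along solutions.  After substituting (i)-(iii), every
    compartment contributes its pressure times its net inflow and every branch its flow times
    its pressure drop; these products telescope around the single closed loop
    LA -> LV -> AR^SYS -> VEN^SYS -> RA -> RV -> AR^PUL -> VEN^PUL -> LA, leaving the active
    elastance terms, the valve losses Q_v (p1 - p2) = - Pi_v and the resistive losses - R Q^2.
    Integrating over a period, E(T) - E(0) = 0 is exactly W^act + W^diss. *)

Section ContinuousOn.

Context {T : UniformSpace} (D : T -> Prop).

Lemma continuous_on_const (c : R) : continuous_on D (fun _ => c).
Proof. intros x _. apply filterlim_const. Qed.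

Lemma continuous_on_comp (h : R -> R) (f : T -> R) :
  (forall y, continuous h y) -> continuous_on D f -> continuous_on D (fun x => h (f x)).
Proof. intros Hh Hf x Dx. exact (filterlim_comp _ _ _ f h _ _ _ (Hf x Dx) (Hh (f x))). Qed.

Lemma continuous_on_comp_2 (h : R -> R -> R) (f g : T -> R) :
  (forall y z, filterlim (fun p : R * R => h (fst p) (snd p))
                 (filter_prod (locally y) (locally z)) (locally (h y z))) ->
  continuous_on D f -> continuous_on D g -> continuous_on D (fun x => h (f x) (g x)).
Proof. intros Hh Hf Hg x Dx. exact (filterlim_comp_2 f g h (Hf x Dx) (Hg x Dx) (Hh _ _)). Qed.

Lemma continuous_on_plus (f g : T -> R) :
  continuous_on D f -> continuous_on D g -> continuous_on D (fun x => f x + g x).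
Proof. apply (continuous_on_comp_2 Rplus), (filterlim_plus (V := R_NormedModule)). Qed.

Lemma continuous_on_mult (f g : T -> R) :
  continuous_on D f -> continuous_on D g -> continuous_on D (fun x => f x * g x).
Proof. apply (continuous_on_comp_2 Rmult), (filterlim_mult (K := R_AbsRing)). Qed.

Lemma continuous_on_opp (f : T -> R) :
  continuous_on D f -> continuous_on D (fun x => - f x).
Proof. apply (continuous_on_comp Ropp), (filterlim_opp (V := R_NormedModule)). Qed.

Lemma continuous_on_minus (f g : T -> R) :
  continuous_on D f -> continuous_on D g -> continuous_on D (fun x => f x - g x).
Proof. intros Hf Hg. apply continuous_on_plus, continuous_on_opp; assumption. Qed.

Lemma continuous_on_pow (f : T -> R) (n : nat) :
  continuous_on D f -> continuous_on D (fun x => f x ^ n).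
Proof.
  intros Hf. induction n as [|n IHn].
  - exact (continuous_on_const 1).
  - apply continuous_on_mult; assumption.
Qed.

Lemma continuous_on_abs (f : T -> R) :
  continuous_on D f -> continuous_on D (fun x => Rabs (f x)).
Proof. apply continuous_on_comp, continuous_Rabs. Qed.

End ContinuousOn.

Ltac continuous_on_step :=
  match goal with
  | |- continuous_on _ (fun _ => ?c) => exact (continuous_on_const _ c)
  | |- continuous_on _ (fun x => @?f x + @?g x) => apply (continuous_on_plus _ f g)
  | |- continuous_on _ (fun x => @?f x - @?g x) => apply (continuous_on_minus _ f g)
  | |- continuous_on _ (fun x => - @?f x) => apply (continuous_on_opp _ f)
  | |- continuous_on _ (fun x => @?f x * @?g x) => apply (continuous_on_mult _ f g)
  | |- continuous_on _ (fun x => @?f x ^ ?n) => apply (continuous_on_pow _ f n)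
  | |- continuous_on _ (fun x => Rabs (@?f x)) => apply (continuous_on_abs _ f)
  | |- continuous_on _ _ => assumption
  end.

Section ClosedInterval.

Variables a b : R.
Hypothesis Hab : a <= b.

Definition clamp (t : R) : R := Rmax a (Rmin b t).

Lemma clamp_id t : a <= t <= b -> clamp t = t.
Proof. intros Ht. unfold clamp, Rmax, Rmin. repeat destruct Rle_dec; lra. Qed.

Lemma clamp_in t : a <= clamp t <= b.
Proof. unfold clamp, Rmax, Rmin. repeat destruct Rle_dec; lra. Qed.

Lemma clamp_1_lipschitz x y : Rabs (clamp y - clamp x) <= Rabs (y - x).
Proof. unfold clamp, Rmax, Rmin, Rabs. repeat destruct Rle_dec; repeat destruct Rcase_abs; lra. Qed.

Lemma continuous_comp_clamp (f : R -> R) :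
  continuous_on (fun t => a <= t <= b) f -> forall x, continuous (fun t => f (clamp t)) x.
Proof.
  intros Hf x.
  apply (filterlim_comp _ _ _ clamp f _ (within (fun t => a <= t <= b) (locally (clamp x)))).
  - intros P [eps HP]. exists eps. intros y Hy. apply HP; [| apply clamp_in].
    exact (Rle_lt_trans _ _ _ (clamp_1_lipschitz x y) Hy).
  - apply Hf, clamp_in.
Qed.

Lemma ex_RInt_continuous_on (f : R -> R) :
  continuous_on (fun t => a <= t <= b) f -> ex_RInt f a b.
Proof.
  intros Hf. apply (ex_RInt_ext (fun t => f (clamp t))).
  - rewrite Rmin_left, Rmax_right by exact Hab. intros x Hx. rewrite clamp_id; lra.
  - apply (ex_RInt_continuous (V := R_CompleteNormedModule)).
    intros z _. apply continuous_comp_clamp, Hf.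
Qed.

(* Coquelicot's [is_RInt_derive] wants [f] differentiable on the closed interval; here the
   primitive of the clamped [df] is compared with [f] by the mean value theorem instead. *)
Lemma is_RInt_derive_interior (f df : R -> R) :
  continuous_on (fun t => a <= t <= b) f -> continuous_on (fun t => a <= t <= b) df ->
  (forall t, a < t < b -> is_derive f t (df t)) ->
  is_RInt df a b (f b - f a).
Proof.
  intros Hf Hdf Hder.
  set (g := fun t => df (clamp t)).
  assert (Hg : forall x, continuous g x) by apply continuous_comp_clamp, Hdf.
  assert (Ig : forall u, is_RInt g a u (RInt g a u)).
  { intros u. apply (RInt_correct (V := R_CompleteNormedModule)).
    apply (ex_RInt_continuous (V := R_CompleteNormedModule)). intros; apply Hg. }
  set (G := fun u => RInt g a u).
  assert (HG : forall x, is_derive G x (g x)).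
  { intros x. apply (is_derive_RInt g G a); [apply filter_forall, Ig | apply Hg]. }
  destruct (MVT_gen (fun u => f (clamp u) - G u) a b (fun x => minus (df x) (g x)))
    as [c [Hc HFc]].
  - rewrite Rmin_left, Rmax_right by exact Hab. intros x Hx.
    apply (is_derive_minus (fun u => f (clamp u)) G), HG.
    apply (is_derive_ext_loc f); [| apply Hder, Hx].
    apply (filter_imp (fun u => a < u /\ u < b)).
    + intros u Hu. rewrite clamp_id; lra.
    + apply (open_and _ _ (open_gt a) (open_lt b)), Hx.
  - intros x _. apply continuity_pt_filterlim.
    apply (continuous_minus (fun u => f (clamp u)) G).
    + apply continuous_comp_clamp, Hf.
    + apply ex_derive_continuous. exists (g x). apply HG.
  - rewrite Rmin_left, Rmax_right in Hc by exact Hab.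
    assert (HGa : G a = 0) by apply (RInt_point (V := R_CompleteNormedModule)).
    unfold g, minus, plus, opp in HFc. simpl in HFc.
    rewrite !clamp_id in HFc by lra.
    apply (is_RInt_ext g).
    + rewrite Rmin_left, Rmax_right by exact Hab. intros x Hx. unfold g. rewrite clamp_id; lra.
    + replace (f b - f a) with (G b) by lra. apply Ig.
Qed.

Lemma work_balance_of_periodic_energy (E P1 P2 : R -> R) :
  continuous_on (fun t => a <= t <= b) E ->
  continuous_on (fun t => a <= t <= b) P1 -> continuous_on (fun t => a <= t <= b) P2 ->
  (forall t, a < t < b -> is_derive E t (P1 t + P2 t)) -> E a = E b ->
  exists W1 W2, is_RInt P1 a b W1 /\ is_RInt P2 a b W2 /\ W1 + W2 = 0.
Proof.
  intros HE HP1 HP2 Hder Hper.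
  assert (I1 := RInt_correct _ _ _ (ex_RInt_continuous_on P1 HP1)).
  assert (I2 := RInt_correct _ _ _ (ex_RInt_continuous_on P2 HP2)).
  exists (RInt P1 a b), (RInt P2 a b). split; [exact I1 | split; [exact I2 |]].
  assert (Isum := is_RInt_derive_interior E _ HE (continuous_on_plus _ _ _ HP1 HP2) Hder).
  rewrite Hper, Rminus_diag in Isum.
  exact (filterlim_locally_unique _ _ _ (is_RInt_plus _ _ _ _ _ _ I1 I2) Isum).
Qed.

End ClosedInterval.

(* This closed form shows that the flow is continuous across [p1 = p2], where [valveR] jumps. *)
Lemma valveQ_abs (Rmin Rmax p1 p2 : R) :
  valveQ Rmin Rmax p1 p2
  = (p1 - p2 + Rabs (p1 - p2)) / 2 / Rmax + (p1 - p2 - Rabs (p1 - p2)) / 2 / Rmin.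
Proof.
  unfold valveQ, valveR, Rabs, Rdiv.
  destruct Rlt_dec, Rcase_abs; first [lra | ring].
Qed.

Lemma valvePi_valveQ (Rmin Rmax p1 p2 : R) :
  valvePi Rmin Rmax p1 p2 = - valveQ Rmin Rmax p1 p2 * (p1 - p2).
Proof. unfold valvePi, valveQ, Rdiv. ring. Qed.

Section ModelContinuity.

Context {T : UniformSpace} (D : T -> Prop) (Rmin Rmax : R) (f g : T -> R).
Hypotheses (Hf : continuous_on D f) (Hg : continuous_on D g).

Lemma continuous_on_valveQ : continuous_on D (fun x => valveQ Rmin Rmax (f x) (g x)).
Proof.
  apply (continuous_on_ext _ (fun x => (f x - g x + Rabs (f x - g x)) / 2 / Rmax
                                   + (f x - g x - Rabs (f x - g x)) / 2 / Rmin)).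
  - intros x _. symmetry. apply valveQ_abs.
  - unfold Rdiv. repeat continuous_on_step.
Qed.

Lemma continuous_on_valvePi : continuous_on D (fun x => valvePi Rmin Rmax (f x) (g x)).
Proof.
  apply (continuous_on_ext _ (fun x => - valveQ Rmin Rmax (f x) (g x) * (f x - g x))).
  - intros x _. symmetry. apply valvePi_valveQ.
  - apply continuous_on_mult.
    + apply continuous_on_opp, continuous_on_valveQ.
    + apply continuous_on_minus; assumption.
Qed.

End ModelContinuity.

Ltac solve_continuous_on :=
  unfold chamberP;
  repeat match goal with
  | |- continuous_on _ (fun x => valveQ ?r1 ?r2 (@?f x) (@?g x)) =>
      apply (continuous_on_valveQ _ r1 r2 f g)
  | |- continuous_on _ (fun x => valvePi ?r1 ?r2 (@?f x) (@?g x)) =>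
      apply (continuous_on_valvePi _ r1 r2 f g)
  | |- _ => continuous_on_step
  end.

(* The term [pEX * V t] is the work against the external pressure; its rate is [pEX * dV]
   only because [pEX] is constant. *)
Definition chamber_energy (pEX Ep V0 : R) (V : R -> R) (t : R) : R :=
  Ep / 2 * (V t - V0) ^ 2 + pEX * V t.

Definition quadratic_energy (k : R) (f : R -> R) (t : R) : R := k / 2 * f t ^ 2.

Lemma is_derive_chamber_energy (pEX Ep V0 : R) (V : R -> R) (t dV : R) :
  is_derive V t dV ->
  is_derive (chamber_energy pEX Ep V0 V) t ((pEX + Ep * (V t - V0)) * dV).
Proof.
  intros HV. unfold chamber_energy.
  eapply (eq_rect _ (is_derive _ t)).
  - apply (is_derive_plus (fun u => Ep / 2 * (V u - V0) ^ 2) (fun u => pEX * V u)).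
    + apply is_derive_scal, is_derive_pow, (is_derive_minus V (fun _ => V0)), is_derive_const.
      exact HV.
    + apply is_derive_scal, HV.
  - unfold minus, plus, opp, zero; simpl. field.
Qed.

Lemma is_derive_quadratic_energy (k : R) (f : R -> R) (t df : R) :
  is_derive f t df -> is_derive (quadratic_energy k f) t (f t * (k * df)).
Proof.
  intros Hf. unfold quadratic_energy.
  eapply (eq_rect _ (is_derive _ t)).
  - apply is_derive_scal, is_derive_pow, Hf.
  - simpl. field.
Qed.

Ltac derive_energy :=
  repeat match goal with
  | |- is_derive (fun x => @?f x + @?g x) _ _ => apply (is_derive_plus f g)
  | |- is_derive (fun x => chamber_energy _ _ _ _ x) _ _ =>
      apply is_derive_chamber_energy; eassumption
  | |- is_derive (fun x => quadratic_energy _ _ x) _ _ =>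
      apply is_derive_quadratic_energy; eassumption
  end.

Lemma inertial_branch_power (L R Q dQ dp : R) :
  L / R * dQ = - Q - dp / R -> R <> 0 -> Q * (L * dQ) = - R * Q ^ 2 - Q * dp.
Proof.
  intros Hlaw HR.
  replace (L * dQ) with (R * (L / R * dQ)) by (field; exact HR).
  rewrite Hlaw. field. exact HR.
Qed.

Theorem proposition2
  (* vascular parameters: C, R, L for AR/VEN x SYS/PUL *)
  (CARS CVENS CARP CVENP RARS RVENS RARP RVENP LARS LVENS LARP LVENP : R)
  (* chamber parameters, for LA, LV, RA, RV *)
  (V0LA V0LV V0RA V0RV EpLA EpLV EpRA EpRV : R)
  (EaLA EaLV EaRA EaRV : R -> R)
  (* constant external pressure, valve resistances, period *)
  (pEX Rmin Rmax T : R)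
  (* state functions *)
  (VLA VLV VRA VRV pARS pVENS pARP pVENP QARS QVENS QARP QVENP : R -> R)
  (* their time derivatives *)
  (dVLA dVLV dVRA dVRV dpARS dpVENS dpARP dpVENP dQARS dQVENS dQARP dQVENP : R -> R)
  (* positivity of constants *)
  (HC : 0 < CARS /\ 0 < CVENS /\ 0 < CARP /\ 0 < CVENP)
  (HR : 0 < RARS /\ 0 < RVENS /\ 0 < RARP /\ 0 < RVENP)
  (HL : 0 < LARS /\ 0 < LVENS /\ 0 < LARP /\ 0 < LVENP)
  (HEp : 0 < EpLA /\ 0 < EpLV /\ 0 < EpRA /\ 0 < EpRV)
  (HRv : 0 < Rmin /\ 0 < Rmax)
  (HT : 0 < T)
  (* the given activation functions are continuous on [0,T] *)
  (HEa : forall t, 0 <= t <= T ->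
     cont_in_0T T EaLA t /\ cont_in_0T T EaLV t /\ cont_in_0T T EaRA t /\ cont_in_0T T EaRV t)
  (* the states are continuous on [0,T] ... *)
  (Hcont : forall t, 0 <= t <= T ->
     cont_in_0T T VLA t /\ cont_in_0T T VLV t /\ cont_in_0T T VRA t /\ cont_in_0T T VRV t /\
     cont_in_0T T pARS t /\ cont_in_0T T pVENS t /\ cont_in_0T T pARP t /\ cont_in_0T T pVENP t /\
     cont_in_0T T QARS t /\ cont_in_0T T QVENS t /\ cont_in_0T T QARP t /\ cont_in_0T T QVENP t)
  (* ... and differentiable in (0,T) with the given derivatives *)
  (Hder : forall t, 0 < t < T ->
     is_derive VLA t (dVLA t) /\ is_derive VLV t (dVLV t) /\
     is_derive VRA t (dVRA t) /\ is_derive VRV t (dVRV t) /\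
     is_derive pARS t (dpARS t) /\ is_derive pVENS t (dpVENS t) /\
     is_derive pARP t (dpARP t) /\ is_derive pVENP t (dpVENP t) /\
     is_derive QARS t (dQARS t) /\ is_derive QVENS t (dQVENS t) /\
     is_derive QARP t (dQARP t) /\ is_derive QVENP t (dQVENP t))
  (* the system (i)-(iii) holds on [0,T] *)
  (Hsys : forall t, 0 <= t <= T ->
     let pLA := chamberP pEX EpLA EaLA V0LA VLA t in
     let pLV := chamberP pEX EpLV EaLV V0LV VLV t in
     let pRA := chamberP pEX EpRA EaRA V0RA VRA t in
     let pRV := chamberP pEX EpRV EaRV V0RV VRV t in
     let QMV := valveQ Rmin Rmax pLA pLV in
     let QAV := valveQ Rmin Rmax pLV (pARS t) in
     let QTV := valveQ Rmin Rmax pRA pRV in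
     let QPV := valveQ Rmin Rmax pRV (pARP t) in
     dVLA t = QVENP t - QMV /\
     dVLV t = QMV - QAV /\
     dVRA t = QVENS t - QTV /\
     dVRV t = QTV - QPV /\
     CARS * dpARS t = QAV - QARS t /\
     CVENS * dpVENS t = QARS t - QVENS t /\
     CARP * dpARP t = QPV - QARP t /\
     CVENP * dpVENP t = QARP t - QVENP t /\
     LARS / RARS * dQARS t = - QARS t - (pVENS t - pARS t) / RARS /\
     LVENS / RVENS * dQVENS t = - QVENS t - (pRA - pVENS t) / RVENS /\
     LARP / RARP * dQARP t = - QARP t - (pVENP t - pARP t) / RARP /\
     LVENP / RVENP * dQVENP t = - QVENP t - (pLA - pVENP t) / RVENP)
  (* periodicity c1(0) = c1(T) *)
  (Hper : VLA 0 = VLA T /\ VLV 0 = VLV T /\ VRA 0 = VRA T /\ VRV 0 = VRV T /\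
          pARS 0 = pARS T /\ pVENS 0 = pVENS T /\ pARP 0 = pARP T /\ pVENP 0 = pVENP T /\
          QARS 0 = QARS T /\ QVENS 0 = QVENS T /\ QARP 0 = QARP T /\ QVENP 0 = QVENP T) :
  let Piact := fun t =>
       - (EaLA t) * (VLA t - V0LA) * dVLA t
     + - (EaLV t) * (VLV t - V0LV) * dVLV t
     + - (EaRA t) * (VRA t - V0RA) * dVRA t
     + - (EaRV t) * (VRV t - V0RV) * dVRV t in
  let Pidiss := fun t =>
     let pLA := chamberP pEX EpLA EaLA V0LA VLA t in
     let pLV := chamberP pEX EpLV EaLV V0LV VLV t in
     let pRA := chamberP pEX EpRA EaRA V0RA VRA t in
     let pRV := chamberP pEX EpRV EaRV V0RV VRV t in
       valvePi Rmin Rmax pLA pLV + valvePi Rmin Rmax pLV (pARS t)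
     + valvePi Rmin Rmax pRA pRV + valvePi Rmin Rmax pRV (pARP t)
     + (- RARS * (QARS t) ^ 2) + (- RVENS * (QVENS t) ^ 2)
     + (- RARP * (QARP t) ^ 2) + (- RVENP * (QVENP t) ^ 2) in
  exists Wact Wdiss : R,
    is_RInt Piact 0 T Wact /\ is_RInt Pidiss 0 T Wdiss /\ Wact + Wdiss = 0.
Proof.
  intros Piact Pidiss.
  set (I := fun t => 0 <= t <= T).
  assert (cont_Ea : continuous_on I EaLA /\ continuous_on I EaLV /\
                    continuous_on I EaRA /\ continuous_on I EaRV)
    by (repeat split; intros t Ht; apply HEa in Ht; tauto).
  assert (cont_states :
    continuous_on I VLA /\ continuous_on I VLV /\ continuous_on I VRA /\ continuous_on I VRV /\
    continuous_on I pARS /\ continuous_on I pVENS /\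
    continuous_on I pARP /\ continuous_on I pVENP /\
    continuous_on I QARS /\ continuous_on I QVENS /\
    continuous_on I QARP /\ continuous_on I QVENP)
    by (repeat split; intros t Ht; apply Hcont in Ht; tauto).
  decompose [and] cont_Ea; decompose [and] cont_states.
  assert (cont_dV : continuous_on I dVLA /\ continuous_on I dVLV /\
                    continuous_on I dVRA /\ continuous_on I dVRV).
  { repeat split; (eapply continuous_on_ext;
      [ intros t Ht; destruct (Hsys t Ht) as (eLA & eLV & eRA & eRV & _); symmetry;
        first [exact eLA | exact eLV | exact eRA | exact eRV]
      | solve_continuous_on ]). }
  decompose [and] cont_dV.
  apply (work_balance_of_periodic_energy 0 T (Rlt_le _ _ HT) (fun t =>
      chamber_energy pEX EpLA V0LA VLA t + chamber_energy pEX EpLV V0LV VLV t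
    + chamber_energy pEX EpRA V0RA VRA t + chamber_energy pEX EpRV V0RV VRV t
    + quadratic_energy CARS pARS t + quadratic_energy CVENS pVENS t
    + quadratic_energy CARP pARP t + quadratic_energy CVENP pVENP t
    + quadratic_energy LARS QARS t + quadratic_energy LVENS QVENS t
    + quadratic_energy LARP QARP t + quadratic_energy LVENP QVENP t)).
  - unfold chamber_energy, quadratic_energy. solve_continuous_on.
  - unfold Piact. solve_continuous_on.
  - unfold Pidiss. solve_continuous_on.
  - intros t Ht.
    destruct (Hder t Ht) as (? & ? & ? & ? & ? & ? & ? & ? & ? & ? & ? & ?).
    destruct (Hsys t ltac:(lra))
      as (eLA & eLV & eRA & eRV & eARS & eVENS & eARP & eVENP & lARS & lVENS & lARP & lVENP).
    eapply (eq_rect _ (is_derive _ t)); [derive_energy |].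
    unfold plus; simpl.
    rewrite eARS, eVENS, eARP, eVENP,
      (inertial_branch_power _ _ _ _ _ lARS), (inertial_branch_power _ _ _ _ _ lVENS),
      (inertial_branch_power _ _ _ _ _ lARP), (inertial_branch_power _ _ _ _ _ lVENP) by lra.
    unfold Piact, Pidiss. rewrite !valvePi_valveQ, eLA, eLV, eRA, eRV.
    unfold chamberP. ring.
  - unfold chamber_energy, quadratic_energy. decompose [and] Hper. congruence.
Qed.
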